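(* Let $0\le t\le s$ and $m,n\ge1$ be integers. If there exist a $(t,s,n)$-AONT and a $(t,s,m)$-AONT, then there exists a $(t,s,mn)$-AONT.
   Context: Let $X$ be a finite alphabet with $|X|=v$ and $0\le t\le s$. A $(t,s,v)$-AONT is a bijection $\phi:X^s\to X^s$ such that for every $I\subseteq\{1,\dots,s\}$ with $|I|=t$ and every $J\subseteq\{1,\dots,s\}$ with $|J|=s-t$, the map $x\mapsto\big((x_i)_{i\in I},(\phi(x)_j)_{j\in J}\big)$ is a bijection $X^s\to X^t\times X^{s-t}$ (i.e. fixing any $s-t$ outputs leaves any $t$ inputs completely undetermined). *)

From mathcomp Require Import all_boot.
Set Implicit Arguments. Unset Strict Implicit. Unset Printing Implicit Defensive.

Definition word (X : finType) (s : nat) := {ffun 'I_s -> X}.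

Definition restr (X : finType) (s : nat) (I : {set 'I_s}) (x : word X s)
  : {ffun {i : 'I_s | i \in I} -> X} := [ffun i => x (val i)].

(* (t,s,v)-AONT over alphabet X (with #|X| = v imposed separately):
   a bijection phi : X^s -> X^s such that for all I, J with |I| = t and
   |J| = s - t, the map x |-> (x|_I, phi(x)|_J) is a bijection. *)
Definition is_AONT (X : finType) (t s : nat) (phi : word X s -> word X s) : Prop :=
  bijective phi /\
  forall I J : {set 'I_s}, #|I| = t -> #|J| = s - t ->
    bijective (fun x : word X s => (restr I x, restr J (phi x))).

Definition AONT_exists (t s v : nat) : Prop :=
  exists (X : finType), #|X| = v /\ exists phi : word X s -> word X s, is_AONT t phi.

From mathcomp Require Import all_boot.
Set Implicit Arguments. Unset Strict Implicit. Unset Printing Implicit Defensive.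

(* Identify the alphabet Y * X with pairs of letters, so that a word over
   Y * X is a pair of words over Y and X. Running a (t,s,|Y|)-AONT on the
   first component and a (t,s,|X|)-AONT on the second gives a
   (t,s,|Y||X|)-AONT: every map that has to be a bijection is, up to this
   identification, the product of the corresponding bijections for Y and X. *)

Lemma bij_pair_map (A A' B B' : Type) (f : A -> A') (g : B -> B') :
  bijective f -> bijective g -> bijective (fun p : A * B => (f p.1, g p.2)).
Proof.
move=> [f' fK f'K] [g' gK g'K].
by exists (fun p => (f' p.1, g' p.2)) => [[a b]|[a b]] /=; rewrite ?fK ?gK ?f'K ?g'K.
Qed.

Definition pair_interchange (A B C D : Type) (p : (A * B) * (C * D)) :
  (A * C) * (B * D) := ((p.1.1, p.2.1), (p.1.2, p.2.2)).

Lemma bij_pair_interchange (A B C D : Type) : bijective (@pair_interchange A B C D).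
Proof. by exists (@pair_interchange A C B D) => [[[a b] [c d]]|[[a c] [b d]]]. Qed.

Section ZipFfun.
Variables (D Y X : finType).

Definition unzip_ffun (f : {ffun D -> Y * X}) : {ffun D -> Y} * {ffun D -> X} :=
  ([ffun i => (f i).1], [ffun i => (f i).2]).

Definition zip_ffun (p : {ffun D -> Y} * {ffun D -> X}) : {ffun D -> Y * X} :=
  [ffun i => (p.1 i, p.2 i)].

Lemma unzip_ffunK : cancel unzip_ffun zip_ffun.
Proof. by move=> f; apply/ffunP => i; rewrite !ffunE; case: (f i). Qed.

Lemma zip_ffunK : cancel zip_ffun unzip_ffun.
Proof. by move=> [a b]; congr pair; apply/ffunP => i; rewrite !ffunE. Qed.

Lemma bij_unzip_ffun : bijective unzip_ffun.
Proof. exact: Bijective unzip_ffunK zip_ffunK. Qed.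

Lemma bij_zip_ffun : bijective zip_ffun.
Proof. exact: Bijective zip_ffunK unzip_ffunK. Qed.

End ZipFfun.

Arguments unzip_ffun {D Y X}.
Arguments zip_ffun {D Y X}.

Lemma restr_zip (Y X : finType) (s : nat) (I : {set 'I_s})
    (p : word Y s * word X s) :
  restr I (zip_ffun p) = zip_ffun (restr I p.1, restr I p.2).
Proof. by apply/ffunP => i; rewrite !ffunE. Qed.

Definition word_pair_map (Y X : finType) (s : nat)
    (phiY : word Y s -> word Y s) (phiX : word X s -> word X s) :
  word (Y * X)%type s -> word (Y * X)%type s :=
  zip_ffun \o (fun p => (phiY p.1, phiX p.2)) \o unzip_ffun.

Section PairAONT.
Variables (Y X : finType) (t s : nat).
Variables (phiY : word Y s -> word Y s) (phiX : word X s -> word X s).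

Let phi := word_pair_map phiY phiX.

Lemma bij_word_pair_map : bijective phiY -> bijective phiX -> bijective phi.
Proof.
move=> bijY bijX.
apply: bij_comp _ (bij_unzip_ffun _ _ _).
exact: bij_comp (bij_zip_ffun _ _ _) (bij_pair_map bijY bijX).
Qed.

Lemma word_pair_map_restrE (I J : {set 'I_s}) :
  (fun z => (restr I z, restr J (phi z))) =1
  (fun p => (zip_ffun p.1, zip_ffun p.2)) \o @pair_interchange _ _ _ _ \o
  (fun p => ((restr I p.1, restr J (phiY p.1)), (restr I p.2, restr J (phiX p.2))))
  \o unzip_ffun.
Proof.
move=> z; congr pair; last exact: restr_zip.
by rewrite -{1}(unzip_ffunK z) restr_zip.
Qed.

Lemma word_pair_map_AONT : is_AONT t phiY -> is_AONT t phiX -> is_AONT t phi.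
Proof.
move=> [bijY aontY] [bijX aontX]; split; first exact: bij_word_pair_map.
move=> I J cardI cardJ; apply: eq_bij (fsym (word_pair_map_restrE I J)).
apply: bij_comp _ (bij_unzip_ffun _ _ _).
apply: bij_comp _ (bij_pair_map (aontY I J cardI cardJ) (aontX I J cardI cardJ)).
apply: bij_comp; last exact: bij_pair_interchange.
exact: bij_pair_map (bij_zip_ffun _ _ _) (bij_zip_ffun _ _ _).
Qed.

End PairAONT.

Theorem lemma3p1 (t s m n : nat) :
  t <= s -> 1 <= m -> 1 <= n ->
  AONT_exists t s n -> AONT_exists t s m -> AONT_exists t s (m * n).
Proof.
move=> _ _ _ [X [cardX [phiX aontX]]] [Y [cardY [phiY aontY]]].
exists (Y * X)%type; split; first by rewrite card_prod cardX cardY.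
by exists (word_pair_map phiY phiX); apply: word_pair_map_AONT.
Qed.
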